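(* Let $(G,c)$ be a W-state graph, and let $X$ and $X'$ be the vertex sets of the two connected components of the spanning subgraph $G_m=(V(G),E_m(G))$ of monochromatic edges. If $\min(|X|,|X'|)\ge 3$, then $G$ is bicritical.
   Context: Graphs may have parallel edges but no loops. A half-edge $2$-colouring $c$ of $G$ assigns to each pair $(e,w)$ with $w$ an endpoint of edge $e$ a colour in $\{0,1\}$ (0 = blue, 1 = red). An edge $e=uv$ is bichromatic if $c(e,u)\neq c(e,v)$ and monochromatic otherwise; $E_m(G)$ is the set of monochromatic edges; standing convention: monochromatic edges are blue at both ends. A graph is matching-covered if every edge lies in some perfect matching. A W-state graph is a half-edge $2$-coloured matching-covered graph $(G,c)$ in which every perfect matching contains exactly one bichromatic edge, and every vertex $v$ is incident with an edge $e$ with $c(e,v)=1$. For any W-state graph, $G_m$ has exactly two connected components. A graph $G$ with $|V(G)|\ge 4$ is bicritical if $G-\{u,v\}$ has a perfect matching for all distinct $u,v\in V(G)$. *)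

(* Parallel edges are allowed (distinct edges may have the same endpoints).
   A half-edge 2-colouring is c : E -> V -> bool, where only the values
   c e (src e) and c e (dst e) are meaningful (true = 1 = red, false = 0 = blue). *)
From mathcomp Require Import all_boot.
Set Implicit Arguments. Unset Strict Implicit. Unset Printing Implicit Defensive.

Section Graphs.
Variables (V E : finType) (src dst : E -> V).

Definition loopless : Prop := forall e, src e != dst e.

Definition incident (e : E) (v : V) : bool := (src e == v) || (dst e == v).

Definition perfect_matching_avoiding (S : {set V}) (M : {set E}) : Prop :=
  (forall e, e \in M -> forall v, v \in S -> ~~ incident e v) /\
  (forall v, v \notin S -> #|[set e in M | incident e v]| = 1).

Definition perfect_matching (M : {set E}) : Prop :=
  perfect_matching_avoiding set0 M.

Definition matching_covered : Prop :=
  forall e, exists M, perfect_matching M /\ e \in M.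

Definition bicritical : Prop :=
  4 <= #|V| /\
  forall u v : V, u != v ->
    exists M, perfect_matching_avoiding [set u; v] M.

Variable c : E -> V -> bool.

Definition bichromatic (e : E) : bool := c e (src e) != c e (dst e).
Definition monochromatic (e : E) : bool := c e (src e) == c e (dst e).

Definition mono_blue : Prop :=
  forall e, monochromatic e -> c e (src e) = false /\ c e (dst e) = false.

Definition W_state : Prop :=
  matching_covered /\
  (forall M, perfect_matching M -> #|[set e in M | bichromatic e]| = 1) /\
  (forall v, exists e, incident e v /\ c e v = true).

Definition madj : rel V :=
  fun x y => [exists e, monochromatic e &&
      (((src e == x) && (dst e == y)) || ((src e == y) && (dst e == x)))].

Definition mcomponent (X : {set V}) : Prop :=
  exists x, X = [set y | connect madj x y].

End Graphs.

From mathcomp Require Import all_boot.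
Set Implicit Arguments. Unset Strict Implicit. Unset Printing Implicit Defensive.

(* In a perfect matching of a W-state graph every edge but the bichromatic one
   is monochromatic, so for a vertex set K closed under monochromatic edges the
   parity of |K| is that of the number of ends of this bichromatic edge in K.
   If a nonempty proper closed K were even, a perfect matching through a
   bichromatic edge inside K glued with one through a bichromatic edge outside
   K would contain two bichromatic edges; hence K and its complement are odd
   and every bichromatic edge has exactly one end in K.  Every vertex w lies on
   a bichromatic edge (the one carrying its red half-edge), and restricting a
   perfect matching through that edge to K gives a perfect matching of K - w.
   Two such matchings, one on each side, avoid u and v lying on opposite sides.
   For u, v both in K, drop the edge vx from the matching of K - u and cover x
   and the complement of K by the bichromatic edge xx' together with a
   matching of the complement minus x'.  A component of G_m is such a K, the
   other component shows it is proper, and the size bound gives |V| >= 4. *)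

Section PerfectMatchingOn.
Variables (V E : finType) (src dst : E -> V).

Local Notation inc := (incident src dst).
Implicit Types (S T K : {set V}) (M N : {set E}).

Definition ends (e : E) : {set V} := [set src e; dst e].

Lemma incidentE e v : inc e v = (v \in ends e).
Proof. by rewrite !inE /incident ![_ == v]eq_sym. Qed.

(* Meaningful only when [e] is incident with [v]. *)
Definition opp_end (e : E) (v : V) : V := if src e == v then dst e else src e.

Lemma ends_opp_end e v : inc e v -> ends e = [set v; opp_end e v].
Proof.
rewrite /incident /opp_end /ends; case: eqP => [->//|_] /eqP<-.
exact: setUC.
Qed.

Lemma addb_opp_end (K : {set V}) e v : inc e v ->
  (src e \in K) (+) (dst e \in K) = (v \in K) (+) (opp_end e v \in K).
Proof. by rewrite /incident /opp_end; case: eqP => [->//|_] /eqP<-; rewrite addbC. Qed.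

Definition perfect_matching_on (T : {set V}) (N : {set E}) : Prop :=
  (forall e, e \in N -> ends e \subset T) /\
  (forall v, v \in T -> #|[set e in N | inc e v]| = 1).

Lemma perfect_matching_avoidingE S M :
  perfect_matching_avoiding src dst S M <-> perfect_matching_on (~: S) M.
Proof.
split=> [[HS H1]|[HT H1]]; split=> [e eM|v vS].
- by apply/subsetP=> v; rewrite -incidentE in_setC; apply: contraL; apply: HS.
- by apply: H1; rewrite -in_setC.
- by move=> v vS; rewrite incidentE; apply: contraL vS => /(subsetP (HT e eM)); rewrite in_setC.
- by apply: H1; rewrite in_setC.
Qed.

Lemma perfect_matchingE M : perfect_matching src dst M <-> perfect_matching_on setT M.
Proof. by rewrite -setC0; apply: perfect_matching_avoidingE. Qed.

Section Incidence.
Variables (T : {set V}) (N : {set E}).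
Hypothesis pmN : perfect_matching_on T N.

Lemma pm_on_ends_sub {e} : e \in N -> ends e \subset T.
Proof. exact: pmN.1. Qed.

Lemma pm_on_edge_at {v} : v \in T -> exists2 e, e \in N & inc e v.
Proof.
move=> vT; have /eqP/cards1P[e He] := pmN.2 v vT.
by have := set11 e; rewrite -He inE => /andP[]; exists e.
Qed.

Lemma pm_on_edge_uniq {v e1 e2} :
  v \in T -> e1 \in N -> e2 \in N -> inc e1 v -> inc e2 v -> e1 = e2.
Proof.
move=> vT e1N e2N i1 i2; have /eqP/cards1P[e He] := pmN.2 v vT.
have : e1 \in [set e in N | inc e v] by rewrite inE e1N i1.
have : e2 \in [set e in N | inc e v] by rewrite inE e2N i2.
by rewrite He !inE => /eqP-> /eqP->.
Qed.

Lemma pm_on_incident {e v} : e \in N -> inc e v -> v \in T.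
Proof. by move=> eN; rewrite incidentE; apply/subsetP/pm_on_ends_sub. Qed.

End Incidence.

Lemma pm_on_intro T N :
  (forall e, e \in N -> ends e \subset T) ->
  (forall v, v \in T -> exists2 e, e \in N & inc e v) ->
  (forall v e1 e2, v \in T -> e1 \in N -> e2 \in N -> inc e1 v -> inc e2 v -> e1 = e2) ->
  perfect_matching_on T N.
Proof.
move=> HT Hex Huniq; split=> // v vT; apply/eqP/cards1P.
have [e eN ie] := Hex v vT; exists e; apply/setP=> f; rewrite !inE.
apply/andP/eqP=> [[fN fv]|->//]; exact: Huniq fv ie.
Qed.

Lemma pm_on_edge e : perfect_matching_on (ends e) [set e].
Proof.
apply: pm_on_intro => [f|v|v f1 f2 _].
- by rewrite inE => /eqP->.
- by move=> ve; exists e; rewrite ?set11 ?incidentE.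
- by rewrite !inE => /eqP-> /eqP->.
Qed.

Lemma pm_onU T1 T2 N1 N2 : [disjoint T1 & T2] ->
  perfect_matching_on T1 N1 -> perfect_matching_on T2 N2 ->
  perfect_matching_on (T1 :|: T2) (N1 :|: N2).
Proof.
move=> dT pm1 pm2; apply: pm_on_intro => [e|v|v e1 e2].
- case/setUP=> eN.
    exact: subset_trans (pm_on_ends_sub pm1 eN) (subsetUl _ _).
  exact: subset_trans (pm_on_ends_sub pm2 eN) (subsetUr _ _).
- case/setUP=> vT.
    by have [e eN ev] := pm_on_edge_at pm1 vT; exists e; rewrite ?inE ?eN.
  by have [e eN ev] := pm_on_edge_at pm2 vT; exists e; rewrite ?inE ?eN ?orbT.
- have onlyN1 e : v \in T1 -> e \in N1 :|: N2 -> inc e v -> e \in N1.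
    by move=> vT1 /setUP[//|eN2] /(pm_on_incident pm2 eN2); rewrite (disjointFr dT vT1).
  have onlyN2 e : v \in T2 -> e \in N1 :|: N2 -> inc e v -> e \in N2.
    by move=> vT2 /setUP[eN1|//] /(pm_on_incident pm1 eN1); rewrite (disjointFl dT vT2).
  case/setUP=> vT e1N e2N i1 i2.
    exact: (pm_on_edge_uniq pm1 vT (onlyN1 _ vT e1N i1) (onlyN1 _ vT e2N i2) i1 i2).
  exact: (pm_on_edge_uniq pm2 vT (onlyN2 _ vT e1N i1) (onlyN2 _ vT e2N i2) i1 i2).
Qed.

Lemma pm_onD1 T N e : perfect_matching_on T N -> e \in N ->
  perfect_matching_on (T :\: ends e) (N :\ e).
Proof.
move=> pmN eN; apply: pm_on_intro => [f|v|v f1 f2].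
- rewrite !inE => /andP[fe fN]; apply/subsetP=> v vf; rewrite inE.
  rewrite (subsetP (pm_on_ends_sub pmN fN)) // andbT -incidentE.
  apply: contra fe => ve; apply/eqP.
  have fv : inc f v by rewrite incidentE.
  exact: (pm_on_edge_uniq pmN (pm_on_incident pmN eN ve) fN eN fv ve).
- rewrite inE -incidentE => /andP[nev vT]; have [f fN fv] := pm_on_edge_at pmN vT.
  by exists f; rewrite // !inE fN andbT; apply: contraNneq nev => <-.
- rewrite !inE => /andP[_ vT] /andP[_ f1N] /andP[_ f2N].
  exact: (pm_on_edge_uniq pmN vT f1N f2N).
Qed.

Lemma pm_on_restrict T N K : perfect_matching_on T N ->
  {in N, forall e, (src e \in K) = (dst e \in K)} ->
  perfect_matching_on (T :&: K) [set e in N | src e \in K].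
Proof.
move=> pmN HK.
have endsK e v : e \in N -> inc e v -> (v \in K) = (src e \in K).
  by move=> eN /orP[]/eqP<- //; rewrite HK.
apply: pm_on_intro => [e|v|v e1 e2].
- rewrite inE => /andP[eN sK]; rewrite subsetI (pm_on_ends_sub pmN eN).
  by apply/subsetP=> v; rewrite -incidentE => /(endsK _ _ eN)->.
- rewrite inE => /andP[vT vK]; have [e eN ev] := pm_on_edge_at pmN vT.
  by exists e; rewrite // inE eN -(endsK _ _ eN ev).
- rewrite !inE => /andP[vT _] /andP[e1N _] /andP[e2N _].
  exact: (pm_on_edge_uniq pmN vT e1N e2N).
Qed.

Section Loopless.
Hypothesis loopless_G : loopless src dst.

Lemma opp_end_neq e v : inc e v -> opp_end e v != v.
Proof.
rewrite /incident /opp_end; case: eqP => [<-|_ /eqP<-]; last by [].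
by rewrite eq_sym loopless_G.
Qed.

Lemma card_pm_sum_ends M K : perfect_matching_on setT M ->
  #|K| = \sum_(e in M) ((src e \in K) + (dst e \in K)).
Proof.
move=> pmM.
have deg1 v : \sum_(e in M) (inc e v : nat) = 1.
  rewrite -(pmM.2 v (in_setT v)) -sum1_card [LHS]big_mkcond [RHS]big_mkcond /=.
  by apply: eq_bigr => e _; rewrite inE; case: (e \in M); case: (inc e v).
have inc_nat e v : (inc e v : nat) = (src e == v) + (dst e == v).
  by rewrite /incident; case: eqP => // <-; rewrite eq_sym (negbTE (loopless_G e)).
have sum_eq_in u : \sum_(v in K) (u == v : nat) = (u \in K).
  rewrite big_mkcond (bigD1 u) //= eqxx big1 ?addn0; first by case: (u \in K).
  by move=> v /negPf; rewrite eq_sym => ->; case: (v \in K).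
rewrite -sum1_card (eq_bigr (fun v => \sum_(e in M) (inc e v : nat))) => [|v _]; last by rewrite deg1.
rewrite exchange_big; apply: eq_bigr => e _.
by rewrite (eq_bigr _ (fun v _ => inc_nat e v)) big_split /= !sum_eq_in.
Qed.

Lemma odd_card_pm M K g : perfect_matching_on setT M -> g \in M ->
  {in M, forall e, e != g -> (src e \in K) = (dst e \in K)} ->
  odd #|K| = (src g \in K) (+) (dst g \in K).
Proof.
move=> pmM gM HK; rewrite (card_pm_sum_ends K pmM) (bigD1 g) //= oddD.
rewrite (eq_bigr (fun e => (src e \in K) * 2)) => [|e /andP[eM neg]]; last first.
  by rewrite -(HK e eM neg) muln2 addnn.
by rewrite -big_distrl /= oddM andbF addbF oddD !oddb.
Qed.

End Loopless.

End PerfectMatchingOn.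

Section MonochromaticComponents.
Variables (V E : finType) (src dst : E -> V) (c : E -> V -> bool).
Implicit Types (K X : {set V}).

Local Notation mono := (monochromatic src dst c).
Local Notation madj := (madj src dst c).

Definition mclosed K : Prop := forall e, mono e -> (src e \in K) = (dst e \in K).

Lemma mclosedC K : mclosed K -> mclosed (~: K).
Proof. by move=> clK e me; rewrite !inE clK. Qed.

Lemma madj_sym : symmetric madj.
Proof.
by move=> x y; apply/existsP/existsP=> -[e /andP[me exy]]; exists e; rewrite me orbC.
Qed.

Lemma madj_mono e : mono e -> madj (src e) (dst e).
Proof. by move=> me; apply/existsP; exists e; rewrite me !eqxx. Qed.

Lemma mcomponent_mclosed X : mcomponent src dst c X -> mclosed X.
Proof.
move=> [x ->] e me; rewrite !inE; apply/idP/idP=> /connect_trans; apply; apply: connect1.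
  exact: madj_mono.
by rewrite madj_sym; apply: madj_mono.
Qed.

Lemma mcomponent_disjoint X X' : mcomponent src dst c X -> mcomponent src dst c X' ->
  X != X' -> [disjoint X & X'].
Proof.
move=> [x ->] [x' ->]; apply: contraR; rewrite -setI_eq0 => /set0Pn[y].
rewrite !inE => /andP[xy x'y]; apply/eqP/setP=> z; rewrite !inE.
have symG := sym_connect_sym madj_sym.
by rewrite (same_connect symG xy) (same_connect symG x'y).
Qed.

End MonochromaticComponents.

Section WState.
Variables (V E : finType) (src dst : E -> V) (c : E -> V -> bool).
Hypotheses (loopless_G : loopless src dst) (mono_blue_c : mono_blue src dst c)
  (W_state_c : W_state src dst c).

Local Notation inc := (incident src dst).
Local Notation pm_on := (perfect_matching_on src dst).
Local Notation ends := (ends src dst).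
Local Notation opp_end := (opp_end src dst).
Local Notation mono := (monochromatic src dst c).
Local Notation bich := (bichromatic src dst c).
Local Notation mclosed := (mclosed src dst c).
Implicit Types (K : {set V}) (M N : {set E}).

Lemma pm_bich_uniq M g1 g2 :
  pm_on setT M -> g1 \in M -> g2 \in M -> bich g1 -> bich g2 -> g1 = g2.
Proof.
move=> /perfect_matchingE pmM g1M g2M b1 b2.
have /eqP/cards1P[g Hg] := W_state_c.2.1 M pmM.
have : g1 \in [set e in M | bich e] by rewrite inE g1M b1.
have : g2 \in [set e in M | bich e] by rewrite inE g2M b2.
by rewrite Hg !inE => /eqP-> /eqP->.
Qed.

Lemma pm_others_mono M g : pm_on setT M -> g \in M -> bich g ->
  {in M, forall e, e != g -> mono e}.
Proof.
move=> pmM gM bg e eM; apply: contraR => /negbTE me.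
by apply/eqP; apply: pm_bich_uniq pmM eM gM _ bg; rewrite /bichromatic -/(mono e) me.
Qed.

Lemma pm_through g : exists2 M, pm_on setT M & g \in M.
Proof. by have [M [/perfect_matchingE pmM gM]] := W_state_c.1 g; exists M. Qed.

Lemma bich_incident x : exists2 g, bich g & inc g x.
Proof.
have [g [xg red]] := W_state_c.2.2 x; exists g => //.
apply: contraT => /negbNE mg; have [rs rd] := mono_blue_c mg.
by move: xg red; rewrite /incident => /orP[]/eqP<-; rewrite ?rs ?rd.
Qed.

Lemma odd_mclosed_bich K g : mclosed K -> bich g ->
  odd #|K| = (src g \in K) (+) (dst g \in K).
Proof.
move=> clK bg; have [M pmM gM] := pm_through g.
apply: (odd_card_pm loopless_G pmM gM) => e eM neg.
exact/clK/(pm_others_mono pmM gM bg).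
Qed.

Lemma pm_uncrossed_even K M g : mclosed K -> ~~ odd #|K| ->
  pm_on setT M -> g \in M -> bich g -> {in M, forall e, (src e \in K) = (dst e \in K)}.
Proof.
move=> clK evenK pmM gM bg e eM; have [->|neg] := eqVneq e g.
  by move: evenK; rewrite (odd_mclosed_bich clK bg) negb_add => /eqP.
exact/clK/(pm_others_mono pmM gM bg).
Qed.

Lemma odd_mclosed K x y : mclosed K -> x \in K -> y \notin K -> odd #|K|.
Proof.
move=> clK xK yK; apply: contraT => evenK.
have [g bg gx] := bich_incident x; have [M pmM gM] := pm_through g.
have [g' bg' g'y] := bich_incident y; have [M' pmM' g'M'] := pm_through g'.
have uncrM := pm_uncrossed_even clK evenK pmM gM bg.
have uncrM' : {in M', forall e, (src e \in ~: K) = (dst e \in ~: K)}.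
  by move=> e eM; rewrite !inE (pm_uncrossed_even clK evenK pmM' g'M' bg').
have dK : [disjoint K & ~: K] by rewrite -subsets_disjoint.
have pmK := pm_on_restrict pmM uncrM; have pmK' := pm_on_restrict pmM' uncrM'.
rewrite !setTI in pmK pmK'; have := pm_onU dK pmK pmK'; rewrite setUCr => pmN.
have gK : src g \in K by case/orP: gx => /eqP gx; [rewrite gx | rewrite uncrM // gx].
have g'K : src g' \in ~: K.
  by case/orP: g'y => /eqP g'y; [rewrite inE g'y | rewrite uncrM' // inE g'y].
have gg' : g = g'.
  apply: (pm_bich_uniq pmN) bg bg'; apply/setUP; [left | right]; rewrite inE.
    by rewrite gM gK.
  by rewrite g'M' g'K.
by rewrite -gg' inE gK in g'K.
Qed.

Lemma bich_opp_end K g w : mclosed K -> odd #|K| -> bich g -> inc g w ->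
  (opp_end g w \in K) = (w \notin K).
Proof.
move=> clK oddK bg gw.
move: oddK; rewrite (odd_mclosed_bich clK bg) (addb_opp_end _ gw).
by case: (w \in K); case: (opp_end g w \in K).
Qed.

Lemma pm_on_setD1 K w : mclosed K -> odd #|K| -> w \in K ->
  exists N, pm_on (K :\ w) N.
Proof.
move=> clK oddK wK; have [g bg gw] := bich_incident w; have [M pmM gM] := pm_through g.
have w'K : opp_end g w \notin K by rewrite (bich_opp_end clK oddK bg gw) wK.
have uncr : {in M :\ g, forall e, (src e \in K) = (dst e \in K)}.
  by move=> e /setD1P[neg eM]; apply/clK/(pm_others_mono pmM gM bg).
exists [set e in M :\ g | src e \in K].
have := pm_on_restrict (pm_onD1 pmM gM) uncr.
congr pm_on; apply/setP=> v; rewrite (ends_opp_end gw) !inE.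
rewrite andbT negb_or -andbA.
by case: (v =P opp_end g w) => [->|_] /=; rewrite ?(negbTE w'K) ?andbF ?andbT.
Qed.

Section AvoidingPairs.
Variable X : {set V}.
Hypotheses (clX : mclosed X) (oddX : odd #|X|) (oddXC : odd #|~: X|).

Lemma avoid_pair_across u v : u \in X -> v \notin X ->
  exists M, pm_on (~: [set u; v]) M.
Proof.
move=> uX vX; have [N1 pmN1] := pm_on_setD1 clX oddX uX.
have vXC : v \in ~: X by rewrite inE.
have [N2 pmN2] := pm_on_setD1 (mclosedC clX) oddXC vXC.
have dN : [disjoint X :\ u & ~: X :\ v].
  by rewrite -setI_eq0; apply/eqP/setP=> w; rewrite !inE; case: (w \in X); rewrite ?andbF.
exists (N1 :|: N2); have := pm_onU dN pmN1 pmN2.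
congr pm_on; apply/setP=> w; rewrite !inE.
rewrite negb_or; have [wX|wX] := boolP (w \in X).
  have wv : w != v by apply: contraNneq vX => <-.
  by rewrite wv !andbT orbF.
have wu : w != u by apply: contraNneq wX => ->.
by rewrite wu !andbT.
Qed.

Lemma pm_on_setU1C x : x \in X -> exists N, pm_on (x |: ~: X) N.
Proof.
move=> xX; have [g bg gx] := bich_incident x; set x' := opp_end g x.
have x'XC : x' \in ~: X by rewrite inE (bich_opp_end clX oddX bg gx) xX.
have [N pmN] := pm_on_setD1 (mclosedC clX) oddXC x'XC.
have pmg := pm_on_edge src dst g; rewrite (ends_opp_end gx) -/x' in pmg.
have dg : [disjoint [set x; x'] & ~: X :\ x'].
  rewrite -setI_eq0; apply/eqP/setP=> w; rewrite !inE.
  by case: (w =P x) => [->|_]; rewrite ?xX ?andbF //=; case: (w =P x') => [->|_]; rewrite ?eqxx.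
exists ([set g] :|: N); have := pm_onU dg pmg pmN.
by rewrite -setUA setD1K.
Qed.

Lemma avoid_pair_inside u v : u \in X -> v \in X -> u != v ->
  exists M, pm_on (~: [set u; v]) M.
Proof.
move=> uX vX uv; have [N1 pmN1] := pm_on_setD1 clX oddX uX.
have vXu : v \in X :\ u by rewrite !inE eq_sym uv vX.
have [e eN1 ev] := pm_on_edge_at pmN1 vXu; set x := opp_end e v.
have xv : x != v := opp_end_neq loopless_G ev.
have xXu : x \in X :\ u.
  by rewrite (subsetP (pm_on_ends_sub pmN1 eN1)) // (ends_opp_end ev) !inE eqxx orbT.
have pmA := pm_onD1 pmN1 eN1; rewrite (ends_opp_end ev) -/x in pmA.
case/setD1P: xXu => xu xX; have [N2 pmN2] := pm_on_setU1C xX.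
have dA : [disjoint X :\ u :\: [set v; x] & x |: ~: X].
  rewrite -setI_eq0; apply/eqP/setP=> w; rewrite !inE.
  by case: (w \in X); rewrite ?andbF //=; case: (w == x); rewrite /= ?orbT ?andbF.
exists (N1 :\ e :|: N2); have := pm_onU dA pmA pmN2.
congr pm_on; apply/setP=> w; rewrite !inE.
have [wX|wX] := boolP (w \in X); last first.
  by rewrite !orbT negb_or; apply/esym/andP; split; apply: contraNneq wX => ->.
have [->|wx] := eqVneq w x; first by rewrite /= orbT (negbTE xu) (negbTE xv).
by rewrite /= !orbF andbT andbC negb_or.
Qed.

End AvoidingPairs.

Lemma pm_avoiding_pair X x y u v : mclosed X -> x \in X -> y \notin X -> u != v ->
  exists M, perfect_matching_avoiding src dst [set u; v] M.
Proof.
move=> clX xX yX uv; have oddX := odd_mclosed clX xX yX.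
have oddXC : odd #|~: X|.
  by apply: (odd_mclosed (mclosedC clX) (x := y) (y := x)); rewrite inE ?negbK.
suff [M pmM] : exists M, pm_on (~: [set u; v]) M by exists M; apply/perfect_matching_avoidingE.
have [uX|uX] := boolP (u \in X); have [vX|vX] := boolP (v \in X).
- exact: (avoid_pair_inside clX oddX oddXC uX vX uv).
- exact: (avoid_pair_across clX oddX oddXC uX vX).
- by rewrite setUC; apply: (avoid_pair_across clX oddX oddXC).
- by apply: (avoid_pair_inside (mclosedC clX) oddXC); rewrite ?setCK ?inE.
Qed.

End WState.

Theorem mainTheorem11 (V E : finType) (src dst : E -> V) (c : E -> V -> bool)
  (X X' : {set V}) :
  loopless src dst ->
  mono_blue src dst c ->
  W_state src dst c ->
  mcomponent src dst c X -> mcomponent src dst c X' -> X != X' ->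
  3 <= minn #|X| #|X'| ->
  bicritical src dst.
Proof.
move=> lG mbc Wc compX compX' neqXX'; rewrite leq_min => /andP[sizeX sizeX'].
have dXX' := mcomponent_disjoint compX compX' neqXX'.
have [x defX] := compX; have [x' defX'] := compX'.
have xX : x \in X by rewrite defX inE connect0.
have x'X : x' \notin X by rewrite (disjointFl dXX') // defX' inE connect0.
split=> [|u v]; last exact: (pm_avoiding_pair lG mbc Wc (mcomponent_mclosed compX) xX x'X).
have := cardsUI X X'; move: dXX'; rewrite -setI_eq0 => /eqP->; rewrite cards0 addn0 => cardXX'.
by rewrite (leq_trans _ (max_card (X :|: X'))) // cardXX' (leq_trans _ (leq_add sizeX sizeX')).
Qed.
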